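(* The Mixing method $M_\theta$ with a step size $\theta\in\left(0,\frac{1}{\max_i\|c_i\|_1}\right)$ is a diffeomorphism.
   Context: Let $C\in\mathbb{R}^{n\times n}$ be symmetric with columns $c_i$ and $c_{ii}=0$; $\|\cdot\|_1$ is the $1$-norm and $\|\cdot\|$ the Euclidean norm. $M_\theta$ maps $V\in\mathbb{R}^{k\times n}$ with unit-norm columns to the result of one cyclic pass: for $i=1,\ldots,n$ in order, $v_i:=(v_i-\theta Vc_i)/\|v_i-\theta Vc_i\|$, where $V$ contains the most recent columns. The map is considered on the product of unit spheres. *)

From HB Require Import structures.
From mathcomp Require Import all_boot all_order all_algebra.
From mathcomp Require Import all_classical all_reals all_analysis.
Set Implicit Arguments. Unset Strict Implicit. Unset Printing Implicit Defensive.
Import Order.TTheory GRing.Theory Num.Theory.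
Import numFieldNormedType.Exports.
Local Open Scope classical_set_scope.
Local Open Scope ring_scope.

Section Smooth.
Context {R : realType} {V W : normedModType R}.

Fixpoint iter_dderiv (vs : seq V) (f : V -> W) : V -> W :=
  match vs with
  | [::] => f
  | v :: vs' => fun x => 'D_v (iter_dderiv vs' f) x
  end.

(* f is C^infinity on the open set U (V finite dimensional): all iterated
   directional derivatives exist and are continuous on U *)
Definition smooth_on (U : set V) (f : V -> W) : Prop :=
  open U /\
  (forall (vs : seq V) (v x : V), U x -> derivable (iter_dderiv vs f) x v) /\
  (forall (vs : seq V) (x : V), U x -> {for x, continuous (iter_dderiv vs f)}).

Definition smooth_near (S : set V) (f : V -> W) : Prop :=
  exists U : set V, exists g : V -> W,
    S `<=` U /\ smooth_on U g /\ (forall x, S x -> g x = f x).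
End Smooth.

Definition diffeo_on {R : realType} {V : normedModType R} (S : set V)
    (f : V -> V) : Prop :=
  (forall x, S x -> S (f x)) /\
  exists h : V -> V,
    (forall x, S x -> S (h x)) /\
    (forall x, S x -> h (f x) = x) /\
    (forall x, S x -> f (h x) = x) /\
    smooth_near S f /\ smooth_near S h.

Section Mixing.
Context {R : realType} {k n : nat}.

Definition enorm (w : 'cV[R]_k) : R := Num.sqrt (\sum_(a < k) w a 0 ^+ 2).

Definition col_norm1 (C : 'M[R]_n) (i : 'I_n) : R := \sum_(j < n) `|C j i|.

Definition unit_cols : set 'M[R]_(k, n) := [set V | forall i, enorm (col i V) = 1].

Definition mix_update (C : 'M[R]_n) (theta : R) (i : 'I_n)
    (V : 'M[R]_(k, n)) : 'M[R]_(k, n) :=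
  let w := col i V - theta *: (V *m col i C) in
  \matrix_(a < k, j < n) (if j == i then w a 0 / enorm w else V a j).

Definition mixing_map (C : 'M[R]_n) (theta : R) (V : 'M[R]_(k, n)) : 'M[R]_(k, n) :=
  foldl (fun V i => mix_update C theta i V) V (enum 'I_n).
End Mixing.

From HB Require Import structures.
From mathcomp Require Import all_boot all_order all_algebra.
From mathcomp Require Import all_classical all_reals all_analysis.
From mathcomp Require Import ring lra.
Import Order.TTheory GRing.Theory Num.Theory.
Import numFieldNormedType.Exports.
Local Open Scope classical_set_scope.
Local Open Scope ring_scope.
Set Implicit Arguments. Unset Strict Implicit. Unset Printing Implicit Defensive.

(* The update of column i replaces v_i by w / |w| with w = v_i - theta V c_i.
   Since c_ii = 0, the vector V c_i does not involve v_i, and on the product of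
   unit spheres |V c_i| <= ||c_i||_1 < 1/theta, so w never vanishes.  The old
   column is recovered from the new one u as t u + theta V c_i, where t is the
   positive root of |t u + theta V c_i|^2 = 1, whose discriminant is positive
   for the same reason.  The update and its inverse are thus built from the
   coordinates by ring operations, inverses of nonvanishing functions and
   square roots of positive ones, on an open neighbourhood of the product of
   spheres; such expressions are closed under directional derivatives, hence
   C^oo.  Composing the n updates, and their inverses in reverse order, gives
   the diffeomorphism. *)

Section SmoothExpr.
Context {R : realType} {k n : nat}.
Local Notation M := 'M[R]_(k, n).

Inductive smooth_expr (U : set M) : (M -> R) -> Prop :=
| smooth_expr_cst c : smooth_expr U (fun _ => c)
| smooth_expr_coord a j : smooth_expr U (fun x => x a j)
| smooth_expr_add f g :
    smooth_expr U f -> smooth_expr U g -> smooth_expr U (fun x => f x + g x)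
| smooth_expr_mul f g :
    smooth_expr U f -> smooth_expr U g -> smooth_expr U (fun x => f x * g x)
| smooth_expr_inv f : smooth_expr U f -> (forall x, U x -> f x != 0) ->
    smooth_expr U (fun x => (f x)^-1)
| smooth_expr_sqrt f : smooth_expr U f -> (forall x, U x -> 0 < f x) ->
    smooth_expr U (fun x => Num.sqrt (f x)).

Lemma smooth_expr_subset (U U' : set M) f :
  U' `<=` U -> smooth_expr U f -> smooth_expr U' f.
Proof.
move=> U'U; elim=> [c|a j|f1 g1 _ ? _ ?|f1 g1 _ ? _ ?|f1 _ ? f1U|f1 _ ? f1U].
- exact: smooth_expr_cst.
- exact: smooth_expr_coord.
- exact: smooth_expr_add.
- exact: smooth_expr_mul.
- by apply: smooth_expr_inv => // x /U'U /f1U.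
- by apply: smooth_expr_sqrt => // x /U'U /f1U.
Qed.

Lemma smooth_expr_comp (U U' : set M) f (F : M -> M) :
  smooth_expr U' f -> (forall a j, smooth_expr U (fun x => F x a j)) ->
  (forall x, U x -> U' (F x)) -> smooth_expr U (fun x => f (F x)).
Proof.
move=> + sF FU; elim=> [c|a j|f1 g1 _ ? _ ?|f1 g1 _ ? _ ?|f1 _ ? f1U|f1 _ ? f1U].
- exact: smooth_expr_cst.
- exact: sF.
- exact: smooth_expr_add.
- exact: smooth_expr_mul.
- by apply: smooth_expr_inv => // x /FU /f1U.
- by apply: smooth_expr_sqrt => // x /FU /f1U.
Qed.

Lemma smooth_expr_opp (U : set M) f :
  smooth_expr U f -> smooth_expr U (fun x => - f x).
Proof.
move=> sf; have -> : (fun x => - f x) = (fun x => -1 * f x).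
  by apply/funext => x; rewrite mulN1r.
by apply: smooth_expr_mul => //; exact: smooth_expr_cst.
Qed.

Lemma smooth_expr_sum (U : set M) I (r : seq I) (P : pred I) (F : I -> M -> R) :
  (forall b, smooth_expr U (F b)) ->
  smooth_expr U (fun x => \sum_(b <- r | P b) F b x).
Proof.
move=> sF; elim: r => [|b r IH].
  under eq_fun do rewrite big_nil; exact: smooth_expr_cst.
under eq_fun do rewrite big_cons.
case: (P b) => //; exact: smooth_expr_add.
Qed.

Lemma differentiable_sqrtr_comp (f : M -> R) x :
  differentiable f x -> 0 < f x -> differentiable (fun y => Num.sqrt (f y)) x.
Proof.
move=> df fx_gt0.
have dsqrt : differentiable (@Num.sqrt R) (f x).
  by apply/derivable1_diffP; have [] := is_derive1_sqrt fx_gt0.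
exact: differentiable_comp df dsqrt.
Qed.

Lemma derive_sqrtr_comp (f : M -> R) x v : differentiable f x -> 0 < f x ->
  'D_v (fun y => Num.sqrt (f y)) x = 'D_v f x * (2 * Num.sqrt (f x))^-1.
Proof.
move=> df fx_gt0.
have [dsqrt _] := is_derive1_sqrt fx_gt0.
rewrite deriveE; last exact: differentiable_sqrtr_comp.
have -> : (fun y => Num.sqrt (f y)) = Num.sqrt \o f by [].
rewrite diff_comp //; last exact/derivable1_diffP.
by rewrite /= deriv1E // derive1E derive_sqrt // deriveE.
Qed.

Lemma smooth_expr_differentiable (U : set M) f x :
  smooth_expr U f -> U x -> differentiable f x.
Proof.
move=> sf; elim: sf x => [c|a j|f1 g1 _ d1 _ d2|f1 g1 _ d1 _ d2|f1 _ d1 f1U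
  |f1 _ d1 f1U] x Ux.
- exact: differentiable_cst.
- exact: differentiable_coord.
- exact: differentiableD (d1 x Ux) (d2 x Ux).
- exact: differentiableM (d1 x Ux) (d2 x Ux).
- exact: differentiableV (d1 x Ux) (f1U x Ux).
- exact: differentiable_sqrtr_comp (d1 x Ux) (f1U x Ux).
Qed.

Lemma derive_coord (x v : M) a j : 'D_v (fun y : M => y a j) x = v a j.
Proof.
have := derive_mx (@derivable_id _ _ x v); rewrite derive_id => vE.
by rewrite [in RHS]vE mxE.
Qed.

Lemma smooth_expr_derive (U : set M) f v : smooth_expr U f ->
  exists2 g, smooth_expr U g & forall x, U x -> 'D_v f x = g x.
Proof.
have D U' g x : smooth_expr U' g -> U' x -> derivable g x v.
  by move=> sg Ux; exact/diff_derivable/(smooth_expr_differentiable sg Ux).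
elim=> [c|a j|f1 g1 s1 [d1 sd1 E1] s2 [d2 sd2 E2]
  |f1 g1 s1 [d1 sd1 E1] s2 [d2 sd2 E2]|f1 s1 [d1 sd1 E1] f1U
  |f1 s1 [d1 sd1 E1] f1U].
- by exists (fun=> 0) => [|x _]; [exact: smooth_expr_cst|exact: derive_cst].
- by exists (fun=> v a j) => [|x _]; [exact: smooth_expr_cst|exact: derive_coord].
- exists (fun x => d1 x + d2 x) => [|x Ux]; first exact: smooth_expr_add.
  by rewrite -E1 // -E2 //; exact: deriveD (D _ _ _ s1 Ux) (D _ _ _ s2 Ux).
- exists (fun x => f1 x * d2 x + g1 x * d1 x) => [|x Ux].
    by apply: smooth_expr_add; apply: smooth_expr_mul.
  by rewrite -E1 // -E2 //; exact: deriveM (D _ _ _ s1 Ux) (D _ _ _ s2 Ux).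
- exists (fun x => - ((f1 x)^-1 * (f1 x)^-1 * d1 x)) => [|x Ux].
    apply/smooth_expr_opp/smooth_expr_mul => //.
    by apply: smooth_expr_mul; apply: smooth_expr_inv.
  rewrite -E1 // (deriveV (f1U x Ux) (D _ _ _ s1 Ux)).
  by rewrite /GRing.scale /= -invfM -expr2 mulNr.
- exists (fun x => d1 x * (2 * Num.sqrt (f1 x))^-1) => [|x Ux].
    apply: smooth_expr_mul => //; apply: smooth_expr_inv.
      by apply: smooth_expr_mul; [exact: smooth_expr_cst|exact: smooth_expr_sqrt].
    by move=> x Ux; rewrite mulf_neq0 // gt_eqF // sqrtr_gt0 f1U.
  rewrite -E1 //.
  exact: derive_sqrtr_comp (smooth_expr_differentiable s1 Ux) (f1U x Ux).
Qed.

Definition smooth_mx (U : set M) (G : M -> M) :=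
  forall a j, smooth_expr U (fun x => G x a j).

Lemma smooth_mx_id (U : set M) : smooth_mx U id.
Proof. by move=> a j; exact: smooth_expr_coord. Qed.

Lemma smooth_mx_differentiable (U : set M) G x :
  smooth_mx U G -> U x -> differentiable G x.
Proof.
move=> sG Ux.
have -> : G = \sum_(a < k) \sum_(j < n) (fun y => G y a j *: delta_mx a j).
  apply/funext => y; rewrite [LHS]matrix_sum_delta fct_sumE.
  by apply: eq_bigr => a _; rewrite fct_sumE.
apply: differentiable_sum => a; apply: differentiable_sum => j.
exact/differentiableZl/(smooth_expr_differentiable (sG a j) Ux).
Qed.

Lemma smooth_mx_iter_dderiv (U : set M) G vs : open U -> smooth_mx U G ->
  exists2 H, smooth_mx U H & forall x, U x -> iter_dderiv vs G x = H x.
Proof.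
move=> oU sG; elim: vs => [|v vs [H sH EH]] /=; first by exists G.
have /choice [d dP] : forall aj : 'I_k * 'I_n, exists g, smooth_expr U g /\
    forall x, U x -> 'D_v (fun y => H y aj.1 aj.2) x = g x.
  by move=> [a j]; have [g] := smooth_expr_derive v (sH a j); exists g.
exists (fun x => \matrix_(a, j) d (a, j) x) => [a j|x Ux].
  under eq_fun do rewrite mxE; by have [] := dP (a, j).
have nE : \forall y \near x, iter_dderiv vs G y = H y.
  by apply: filterS (oU x Ux) => y Uy; exact: EH.
rewrite (near_eq_derive _ nE) derive_mx; last first.
  exact/diff_derivable/(smooth_mx_differentiable sH Ux).
apply/matrixP => a j; rewrite !mxE.
by have [_ ->] := dP (a, j).
Qed.

Lemma smooth_mx_smooth_on (U : set M) G : open U -> smooth_mx U G -> smooth_on U G.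
Proof.
move=> oU sG; split=> //; split=> [vs v x Ux|vs x Ux].
- have [H sH EH] := smooth_mx_iter_dderiv vs oU sG.
  have nE : \forall y \near x, H y = iter_dderiv vs G y.
    by apply: filterS (oU x Ux) => y Uy; rewrite EH.
  apply: near_eq_derivable nE _.
  exact/diff_derivable/(smooth_mx_differentiable sH Ux).
- have [H sH EH] := smooth_mx_iter_dderiv vs oU sG.
  have nE : \forall y \near x, H y = iter_dderiv vs G y.
    by apply: filterS (oU x Ux) => y Uy; rewrite EH.
  have cH : {for x, continuous H}.
    exact: differentiable_continuous (smooth_mx_differentiable sH Ux).
  rewrite /prop_for /continuous_at (EH x Ux).
  exact: cvg_trans (near_eq_cvg nE) cH.
Qed.

(* p certifies that F is given by smooth expressions on the open set {p > 0},
   which contains S. *)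
Definition smooth_step (S : set M) (F : M -> M) :=
  exists p : M -> R, [/\ smooth_expr setT p, smooth_mx [set y | 0 < p y] F
                       & forall y, S y -> S (F y) /\ 0 < p y].

Lemma smooth_mx_foldl I (S : set M) (F : I -> M -> M) s G (U : set M) :
  (forall i, smooth_step S (F i)) ->
  open U -> S `<=` U -> smooth_mx U G -> (forall x, S x -> S (G x)) ->
  exists2 U', open U' & S `<=` U' /\
    smooth_mx U' (fun x => foldl (fun V i => F i V) (G x) s).
Proof.
move=> sF; elim: s G U => [|i s IH] G U oU SU sG SG /=; first by exists U.
have [p [sp sFi SFi]] := sF i.
pose U1 := U `&` [set x | 0 < p (G x)].
have spG : smooth_expr U (fun x => p (G x)).
  exact: smooth_expr_comp sp sG _.
apply: (IH (fun x => F i (G x)) U1).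
- move=> x [Ux pGx].
  have cpG : {for x, continuous (fun x => p (G x))}.
    exact: differentiable_continuous (smooth_expr_differentiable spG Ux).
  exact: filterI (oU x Ux) (cvgr_gt _ cpG 0 pGx).
- by move=> x Sx; split; [exact: SU|have [] := SFi _ (SG x Sx)].
- move=> a j; apply: smooth_expr_comp (sFi a j) _ _ => [a' j'|y []//].
  by apply: smooth_expr_subset (sG a' j') => y [].
- by move=> x Sx; have [] := SFi _ (SG x Sx).
Qed.

Lemma smooth_near_foldl I (S : set M) (F : I -> M -> M) s :
  (forall i, smooth_step S (F i)) ->
  smooth_near S (fun x => foldl (fun V i => F i V) x s).
Proof.
move=> sF; have [U oU [SU sU]] :=
  smooth_mx_foldl s sF openT (@subsetT _ S) (smooth_mx_id setT) (fun x Sx => Sx).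
by exists U, (fun x => foldl (fun V i => F i V) x s); split; last split;
  [|exact: smooth_mx_smooth_on|].
Qed.

End SmoothExpr.

Section Foldl.
Context {T I : Type} (S : set T) (F G : I -> T -> T).

Lemma foldl_maps_to s x : (forall i y, S y -> S (F i y)) ->
  S x -> S (foldl (fun V i => F i V) x s).
Proof. by move=> SF; elim: s x => //= i s IH x Sx; apply/IH/SF. Qed.

Lemma foldl_revK s x : (forall i y, S y -> S (F i y)) ->
  (forall i y, S y -> G i (F i y) = y) -> S x ->
  foldl (fun V i => G i V) (foldl (fun V i => F i V) x s) (rev s) = x.
Proof.
move=> SF FK; elim: s x => //= i s IH x Sx.
by rewrite rev_cons foldl_rcons IH ?FK //; exact: SF.
Qed.

End Foldl.

Lemma diffeo_on_foldl {R : realType} {k n : nat} I (S : set 'M[R]_(k, n))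
    (F G : I -> 'M[R]_(k, n) -> 'M[R]_(k, n)) s :
  (forall i, smooth_step S (F i)) -> (forall i, smooth_step S (G i)) ->
  (forall i x, S x -> G i (F i x) = x) -> (forall i x, S x -> F i (G i x) = x) ->
  diffeo_on S (fun x => foldl (fun V i => F i V) x s).
Proof.
move=> sF sG FK GK.
have SF i y : S y -> S (F i y) by move=> Sy; case: (sF i) => p [_ _ /(_ y Sy) []].
have SG i y : S y -> S (G i y) by move=> Sy; case: (sG i) => p [_ _ /(_ y Sy) []].
split=> [x|]; first exact: foldl_maps_to.
exists (fun x => foldl (fun V i => G i V) x (rev s)); split=> [x|]; first exact: foldl_maps_to.
split=> [x Sx /=|]; first exact: (foldl_revK s SF FK Sx).
split=> [x Sx /=|]; last by split; exact: smooth_near_foldl.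
have := @foldl_revK _ _ S G F (rev s) x SG GK Sx.
by rewrite revK.
Qed.

Section RealInequalities.
Context {R : realType}.

Lemma sqr_addr_le_mulD (A1 B1 Q1 A2 B2 Q2 : R) :
  0 <= A1 -> 0 <= Q1 -> B1 ^+ 2 <= A1 * Q1 ->
  0 <= A2 -> 0 <= Q2 -> B2 ^+ 2 <= A2 * Q2 ->
  (B1 + B2) ^+ 2 <= (A1 + A2) * (Q1 + Q2).
Proof.
move=> A1_ge0 Q1_ge0 B1_le A2_ge0 Q2_ge0 B2_le.
have B12_le : B1 ^+ 2 * B2 ^+ 2 <= (A1 * Q1) * (A2 * Q2).
  by apply: ler_pM => //; exact: sqr_ge0.
have cross_ge0 : 0 <= A1 * Q2 + A2 * Q1 by apply: addr_ge0; exact: mulr_ge0.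
have cross_sqr : (2 * B1 * B2) ^+ 2 <= (A1 * Q2 + A2 * Q1) ^+ 2.
  by have := sqr_ge0 (A1 * Q2 - A2 * Q1); nra.
have cross : 2 * B1 * B2 <= A1 * Q2 + A2 * Q1 by nra.
nra.
Qed.

Lemma sqr_sum_le_mul_sum I (r : seq I) (P : pred I) (f g h : I -> R) :
  (forall i, [/\ 0 <= f i, 0 <= h i & g i ^+ 2 <= f i * h i]) ->
  (\sum_(i <- r | P i) g i) ^+ 2 <=
    (\sum_(i <- r | P i) f i) * (\sum_(i <- r | P i) h i).
Proof.
move=> fgh.
suff [] : [/\ 0 <= \sum_(i <- r | P i) f i, 0 <= \sum_(i <- r | P i) h i &
  (\sum_(i <- r | P i) g i) ^+ 2 <=
    (\sum_(i <- r | P i) f i) * (\sum_(i <- r | P i) h i)] by [].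
elim: r => [|b r [IHf IHh IHg]]; first by rewrite !big_nil expr0n /= mulr0.
rewrite !big_cons; case: (P b) => //.
have [fb hb gb] := fgh b.
split; [exact: addr_ge0|exact: addr_ge0|exact: sqr_addr_le_mulD].
Qed.

Lemma sum_sqr_lincomb m (u y : 'I_m -> R) (al be : R) :
  \sum_(a < m) (al * u a + be * y a) ^+ 2 =
  al ^+ 2 * \sum_(a < m) u a ^+ 2 + 2 * al * be * \sum_(a < m) u a * y a +
  be ^+ 2 * \sum_(a < m) y a ^+ 2.
Proof. by rewrite !mulr_sumr -!big_split /=; apply: eq_bigr => a _; ring. Qed.

Lemma ltr_sqrt_sqrD (s D : R) : 0 < D -> s < Num.sqrt (s ^+ 2 + D).
Proof.
move=> D_gt0; have sD_gt0 : 0 < s ^+ 2 + D by have := sqr_ge0 s; lra.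
apply: le_lt_trans (ler_norm s) _.
by rewrite -sqrtr_sqr ltr_sqrt // ltrDl.
Qed.

Lemma quadratic_root_gt0 (s D : R) : 0 < D -> 0 < - s + Num.sqrt (s ^+ 2 + D).
Proof. by move=> D_gt0; have := ltr_sqrt_sqrD s D_gt0; lra. Qed.

Lemma quadratic_pos_root (s D r : R) : 0 < D -> 0 < r ->
  r ^+ 2 + 2 * s * r = D -> r = - s + Num.sqrt (s ^+ 2 + D).
Proof.
move=> D_gt0 r_gt0 rE; set q := Num.sqrt _.
have q2 : q ^+ 2 = s ^+ 2 + D by rewrite sqr_sqrtr //; have := sqr_ge0 s; lra.
have : (r + s - q) * (r + s + q) = 0 by rewrite -(subrr (q ^+ 2)) {1}q2 -rE; ring.
have := ltr_sqrt_sqrD (- s) D_gt0; rewrite sqrrN -/q => sq.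
by move/eqP; rewrite mulf_eq0 => /orP [/eqP|/eqP]; lra.
Qed.

End RealInequalities.

Section MixingStep.
Context {R : realType} {k n : nat} (C : 'M[R]_n) (theta : R).
Local Notation M := 'M[R]_(k, n).
Local Notation S := (@unit_cols R k n).

Definition Vc (V : M) i a := \sum_(b < n) V a b * C b i.
Definition wcol (V : M) i a := V a i - theta * Vc V i a.
Definition wnorm2 i (V : M) := \sum_(a < k) wcol V i a ^+ 2.
Definition dotVc (V : M) i := \sum_(a < k) V a i * Vc V i a.
Definition normVc2 (V : M) i := \sum_(a < k) Vc V i a ^+ 2.

Definition unmix_discr i (V : M) :=
  (theta * dotVc V i) ^+ 2 + (1 - theta ^+ 2 * normVc2 V i).

(* If u is the new column i, the old one is t u + theta V c_i (V c_i does not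
   depend on column i), with t the positive root of
   t^2 + 2 theta <u, V c_i> t = 1 - theta^2 |V c_i|^2. *)
Definition unmix_update i (V : M) : M :=
  \matrix_(a, j) if j == i then
    (- (theta * dotVc V i) + Num.sqrt (unmix_discr i V)) * V a i + theta * Vc V i a
  else V a j.

Lemma mix_updateE i V : mix_update C theta i V =
  \matrix_(a, j) if j == i then wcol V i a / Num.sqrt (wnorm2 i V) else V a j.
Proof.
have wE a : (col i V - theta *: (V *m col i C)) a 0 = wcol V i a.
  by rewrite !mxE /wcol /Vc; congr (_ - _ * _); apply: eq_bigr => b _; rewrite !mxE.
apply/matrixP => a j; rewrite [LHS]mxE [RHS]mxE /enorm.
case: eqP => // _; rewrite wE /wnorm2; congr (_ / Num.sqrt _).
by apply: eq_bigr => a' _; rewrite wE.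
Qed.

Lemma smooth_expr_Vc U i a : smooth_expr U (fun V : M => Vc V i a).
Proof.
apply: smooth_expr_sum => b.
by apply: smooth_expr_mul; [exact: smooth_expr_coord|exact: smooth_expr_cst].
Qed.

Lemma smooth_expr_dotVc U i : smooth_expr U (fun V : M => dotVc V i).
Proof.
apply: smooth_expr_sum => a.
by apply: smooth_expr_mul; [exact: smooth_expr_coord|exact: smooth_expr_Vc].
Qed.

Lemma smooth_expr_normVc2 U i : smooth_expr U (fun V : M => normVc2 V i).
Proof. by apply: smooth_expr_sum => a; apply: smooth_expr_mul; exact: smooth_expr_Vc. Qed.

Lemma smooth_expr_wcol U i a : smooth_expr U (fun V : M => wcol V i a).
Proof.
apply: smooth_expr_add; first exact: smooth_expr_coord.
apply/smooth_expr_opp/smooth_expr_mul; [exact: smooth_expr_cst|exact: smooth_expr_Vc].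
Qed.

Lemma smooth_expr_wnorm2 U i : smooth_expr U (wnorm2 i).
Proof. by apply: smooth_expr_sum => a; apply: smooth_expr_mul; exact: smooth_expr_wcol. Qed.

Lemma smooth_expr_unmix_discr U i : smooth_expr U (unmix_discr i).
Proof.
have stdot : smooth_expr U (fun V : M => theta * dotVc V i).
  by apply: smooth_expr_mul; [exact: smooth_expr_cst|exact: smooth_expr_dotVc].
apply: smooth_expr_add; first by apply: smooth_expr_mul.
apply: smooth_expr_add; first exact: smooth_expr_cst.
apply/smooth_expr_opp/smooth_expr_mul; [exact: smooth_expr_cst|exact: smooth_expr_normVc2].
Qed.

Lemma smooth_mx_mix_update i :
  smooth_mx [set V | 0 < wnorm2 i V] (mix_update C theta i).
Proof.
move=> a j; have -> : (fun V => mix_update C theta i V a j) =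
    (fun V => if j == i then wcol V i a * (Num.sqrt (wnorm2 i V))^-1 else V a j).
  by apply/funext => V; rewrite mix_updateE mxE.
case: eqP => _; last exact: smooth_expr_coord.
apply: smooth_expr_mul; first exact: smooth_expr_wcol.
apply: smooth_expr_inv => [|V /= V_gt0]; last by rewrite gt_eqF // sqrtr_gt0.
by apply: smooth_expr_sqrt => //; exact: smooth_expr_wnorm2.
Qed.

Lemma smooth_mx_unmix_update i :
  smooth_mx [set V | 0 < unmix_discr i V] (unmix_update i).
Proof.
move=> a j; have -> : (fun V => unmix_update i V a j) = (fun V => if j == i then
    (- (theta * dotVc V i) + Num.sqrt (unmix_discr i V)) * V a i + theta * Vc V i a
    else V a j).
  by apply/funext => V; rewrite mxE.
case: eqP => _; last exact: smooth_expr_coord.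
apply: smooth_expr_add; last first.
  by apply: smooth_expr_mul; [exact: smooth_expr_cst|exact: smooth_expr_Vc].
apply: smooth_expr_mul; last exact: smooth_expr_coord.
apply: smooth_expr_add.
  apply/smooth_expr_opp/smooth_expr_mul; [exact: smooth_expr_cst|exact: smooth_expr_dotVc].
by apply: smooth_expr_sqrt => //; exact: smooth_expr_unmix_discr.
Qed.

Lemma unit_colsP (V : M) : S V <-> forall i, \sum_(a < k) V a i ^+ 2 = 1.
Proof.
have normE i : enorm (col i V) = Num.sqrt (\sum_(a < k) V a i ^+ 2).
  by rewrite /enorm; congr Num.sqrt; apply: eq_bigr => a _; rewrite mxE.
split=> SV i; last by rewrite normE SV sqrtr1.
have := SV i; rewrite normE => /(congr1 (fun x => x ^+ 2)).
by rewrite sqr_sqrtr ?expr1n //; apply: sumr_ge0 => a _; exact: sqr_ge0.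
Qed.

Lemma normVc2_le (V : M) i : S V -> normVc2 V i <= col_norm1 C i ^+ 2.
Proof.
move=> /unit_colsP SV; rewrite /normVc2 /Vc.
apply: (@le_trans _ _ (\sum_(a < k) (col_norm1 C i *
    \sum_(b < n) `|C b i| * V a b ^+ 2))).
  apply: ler_sum => a _; apply: sqr_sum_le_mul_sum => b.
  split; [exact: normr_ge0|by apply: mulr_ge0 => //; exact: sqr_ge0|].
  by rewrite mulrA -expr2 real_normK ?num_real // exprMn mulrC.
rewrite -mulr_sumr exchange_big /=.
have -> : \sum_(b < n) \sum_(a < k) `|C b i| * V a b ^+ 2 = col_norm1 C i.
  by apply: eq_bigr => b _; rewrite -mulr_sumr SV mulr1.
by rewrite expr2.
Qed.

Lemma sqr_dotVc_le (V : M) i : S V -> dotVc V i ^+ 2 <= normVc2 V i.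
Proof.
move=> /unit_colsP SV; rewrite -[normVc2 V i]mul1r -(SV i).
by apply: sqr_sum_le_mul_sum => a; split; [exact: sqr_ge0|exact: sqr_ge0|rewrite exprMn].
Qed.

Lemma wnorm2E (V : M) i : wnorm2 i V =
  \sum_(a < k) V a i ^+ 2 - 2 * theta * dotVc V i + theta ^+ 2 * normVc2 V i.
Proof.
rewrite /wnorm2 /wcol.
under eq_bigr do rewrite -[V _ i]mul1r -mulNr.
by rewrite sum_sqr_lincomb /dotVc /normVc2; ring.
Qed.

Lemma Vc_eq_off_col (V V' : M) i : C i i = 0 ->
  (forall a j, j != i -> V' a j = V a j) -> forall a, Vc V' i a = Vc V i a.
Proof.
move=> Cii V'V a; apply: eq_bigr => b _.
by case: (eqVneq b i) => [->|/V'V ->//]; rewrite Cii !mulr0.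
Qed.

Variable i : 'I_n.
Hypotheses (Cii : C i i = 0) (theta_gt0 : 0 < theta)
  (theta_col : theta * col_norm1 C i < 1).

Lemma theta_normVc2_lt1 (V : M) : S V -> theta ^+ 2 * normVc2 V i < 1.
Proof.
move=> SV; have c_ge0 : 0 <= col_norm1 C i.
  by apply: sumr_ge0 => j _; exact: normr_ge0.
apply: (@le_lt_trans _ _ ((theta * col_norm1 C i) ^+ 2)).
  by rewrite exprMn; apply: ler_wpM2l; [exact: sqr_ge0|exact: normVc2_le].
by rewrite expr_lt1 // mulr_ge0 // ltW.
Qed.

Lemma wnorm2_gt0 (V : M) : S V -> 0 < wnorm2 i V.
Proof.
move=> SV; rewrite wnorm2E ((unit_colsP V).1 SV i).
have Y_lt1 := theta_normVc2_lt1 SV.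
have : (theta * dotVc V i) ^+ 2 <= theta ^+ 2 * normVc2 V i.
  by rewrite exprMn; apply: ler_wpM2l; [exact: sqr_ge0|exact: sqr_dotVc_le].
nra.
Qed.

Lemma unmix_discr_gt0 (V : M) : S V -> 0 < unmix_discr i V.
Proof.
move=> /theta_normVc2_lt1; rewrite /unmix_discr.
by have := sqr_ge0 (theta * dotVc V i); lra.
Qed.

Lemma mix_update_unit_cols (V : M) : S V -> S (mix_update C theta i V).
Proof.
move=> SV; apply/unit_colsP => j; rewrite mix_updateE.
under eq_bigr do rewrite mxE.
case: eqP => _; last exact: (unit_colsP V).1 SV j.
have w_gt0 := wnorm2_gt0 SV.
under eq_bigr do rewrite exprMn exprVn.
by rewrite -mulr_suml sqr_sqrtr ?ltW // divff // gt_eqF.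
Qed.

Lemma unmix_update_unit_cols (V : M) : S V -> S (unmix_update i V).
Proof.
move=> SV; apply/unit_colsP => j.
under eq_bigr do rewrite mxE.
case: eqP => _; last exact: (unit_colsP V).1 SV j.
rewrite sum_sqr_lincomb ((unit_colsP V).1 SV i) -/(dotVc V i) -/(normVc2 V i).
have := sqr_sqrtr (ltW (unmix_discr_gt0 SV)); rewrite /unmix_discr.
set q := Num.sqrt _ => q2; rewrite mulr1.
lra.
Qed.

Lemma mix_updateK (V : M) : S V -> unmix_update i (mix_update C theta i V) = V.
Proof.
move=> SV; set W := mix_update C theta i V.
have w_gt0 := wnorm2_gt0 SV; set r := Num.sqrt (wnorm2 i V).
have r_gt0 : 0 < r by rewrite sqrtr_gt0.
have WE a j : W a j = if j == i then wcol V i a / r else V a j.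
  by rewrite /W mix_updateE mxE.
have WVc : forall a, Vc W i a = Vc V i a.
  by apply: Vc_eq_off_col => // a j /negbTE ji; rewrite WE ji.
set e := \sum_(a < k) wcol V i a * Vc V i a.
have dotW : dotVc W i = e / r.
  rewrite /dotVc /e mulr_suml; apply: eq_bigr => a _.
  by rewrite WE eqxx WVc mulrAC.
have normW : normVc2 W i = normVc2 V i by apply: eq_bigr => a _; rewrite WVc.
(* expand |v_i|^2 = 1 with v_i = w + theta V c_i *)
have rE : r ^+ 2 + 2 * (theta * (e / r)) * r = 1 - theta ^+ 2 * normVc2 V i.
  have := (unit_colsP V).1 SV i.
  have -> : \sum_(a < k) V a i ^+ 2 =
      \sum_(a < k) (1 * wcol V i a + theta * Vc V i a) ^+ 2.
    by apply: eq_bigr => a _; rewrite /wcol mul1r subrK.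
  rewrite sum_sqr_lincomb -/(wnorm2 i V) -(sqr_sqrtr (ltW w_gt0)) -/r -/e.
  rewrite -/(normVc2 V i) expr1n.
  have -> : 2 * (theta * (e / r)) * r = 2 * theta * e by field; rewrite gt_eqF.
  lra.
have D_gt0 : 0 < 1 - theta ^+ 2 * normVc2 V i.
  by rewrite subr_gt0; exact: theta_normVc2_lt1.
have tE := quadratic_pos_root D_gt0 r_gt0 rE.
apply/matrixP => a j; rewrite mxE /unmix_discr dotW normW -tE WVc.
case: eqP => [->|/eqP ji]; last by rewrite WE (negbTE ji).
by rewrite WE eqxx /wcol; field; rewrite gt_eqF.
Qed.

Lemma unmix_updateK (V : M) : S V -> mix_update C theta i (unmix_update i V) = V.
Proof.
move=> SV; set W := unmix_update i V.
set t := - (theta * dotVc V i) + Num.sqrt (unmix_discr i V).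
have t_gt0 : 0 < t.
  by apply: quadratic_root_gt0; have := theta_normVc2_lt1 SV; lra.
have WE a j : W a j = if j == i then t * V a i + theta * Vc V i a else V a j.
  by rewrite /W mxE.
have WVc : forall a, Vc W i a = Vc V i a.
  by apply: Vc_eq_off_col => // a j /negbTE ji; rewrite WE ji.
have wW a : wcol W i a = t * V a i by rewrite /wcol WE eqxx WVc addrK.
have normW : wnorm2 i W = t ^+ 2.
  rewrite /wnorm2; under eq_bigr do rewrite wW exprMn.
  by rewrite -mulr_sumr ((unit_colsP V).1 SV i) mulr1.
apply/matrixP => a j; rewrite mix_updateE mxE normW sqrtr_sqr gtr0_norm // wW.
case: eqP => [->|/eqP ji]; last by rewrite WE (negbTE ji).
by rewrite mulrAC divff ?mul1r // gt_eqF.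
Qed.

Lemma smooth_step_mix_update : smooth_step S (mix_update C theta i).
Proof.
exists (wnorm2 i); split; [exact: smooth_expr_wnorm2|exact: smooth_mx_mix_update|].
by move=> V SV; split; [exact: mix_update_unit_cols|exact: wnorm2_gt0].
Qed.

Lemma smooth_step_unmix_update : smooth_step S (unmix_update i).
Proof.
exists (unmix_discr i); split.
- exact: smooth_expr_unmix_discr.
- exact: smooth_mx_unmix_update.
- by move=> V SV; split; [exact: unmix_update_unit_cols|exact: unmix_discr_gt0].
Qed.

End MixingStep.

Theorem lemma14 (R : realType) (k n : nat) (C : 'M[R]_n) (theta : R) :
  C^T = C ->
  (forall i : 'I_n, C i i = 0) ->
  0 < theta ->
  (forall i : 'I_n, theta * col_norm1 C i < 1) ->
  diffeo_on (@unit_cols R k n) (mixing_map C theta).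
Proof.
move=> _ Cii theta_gt0 theta_col.
apply: (@diffeo_on_foldl R k n _ _ _ (unmix_update C theta)) => i.
- exact: smooth_step_mix_update.
- exact: smooth_step_unmix_update.
- exact: mix_updateK.
- exact: unmix_updateK.
Qed.
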